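(* Let $A_4$ be the alternating group of degree 4. The following d-identities form a basis of d-identities of $A_4$ (i.e. they all hold in $A_4$, and every group satisfying all of them is isomorphic to a section of $A_4$): (1) $\omega_{12}=\bigvee_{0\le i<j\le 12}(x_i=x_j)$; (2) $(x^2=1)\vee(x^3=1)$; (3) $(x_1^3=1)\vee(x_2^3=1)\vee((x_1x_2)^2=1)$; (4) $\bigvee_{(k_1,k_2,k_3)}\big(x_1^{3k_1}x_2^{3k_2}x_3^{3k_3}=1\big)$, the disjunction running over all nonzero vectors $(k_1,k_2,k_3)\in\{0,1\}^3$; (5) $(x_1^4=1)\vee(x_2^4=1)\vee((x_1x_2)^4=1)\vee((x_1x_2^2)^4=1)$.
   Context: A d-identity (disjunctive identity) is a universally quantified formula $\forall x_1\dots x_k\,[(f_1=1)\vee\dots\vee(f_n=1)]$ with the $f_i$ words in the free group on the variables; $u=v$ abbreviates $uv^{-1}=1$. A group satisfies it if it is true for all assignments. For a group $G$, $\mathrm{dvar}(G)$ is the class of groups satisfying every d-identity satisfied by $G$; for finite $G$ it is the class of groups isomorphic to sections (quotients of subgroups) of $G$. A set of d-identities is a basis of d-identities of $G$ if all its members hold in $G$ and every group satisfying them lies in $\mathrm{dvar}(G)$. *)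

From HB Require Import structures.
From mathcomp Require Import all_boot all_fingroup all_solvable.
From mathcomp Require Import alt.
Set Implicit Arguments. Unset Strict Implicit. Unset Printing Implicit Defensive.

Record grp := Grp {
  carrier :> Type;
  gmul : carrier -> carrier -> carrier;
  gone : carrier;
  ginv : carrier -> carrier;
  gmulA : forall x y z, gmul x (gmul y z) = gmul (gmul x y) z;
  gmul1 : forall x, gmul gone x = x;
  gmulV : forall x, gmul (ginv x) x = gone
}.

Fixpoint gexp (G : grp) (x : G) (n : nat) : G :=
  match n with 0 => gone G | S m => gmul x (gexp x m) end.

Definition d_id1 (G : grp) : Prop :=
  forall x : 'I_13 -> G, exists i j : 'I_13, (i < j)%N /\ x i = x j.
Definition d_id2 (G : grp) : Prop :=
  forall x : G, gexp x 2 = gone G \/ gexp x 3 = gone G.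
Definition d_id3 (G : grp) : Prop :=
  forall x1 x2 : G, gexp x1 3 = gone G \/ gexp x2 3 = gone G \/
                    gexp (gmul x1 x2) 2 = gone G.
Definition d_id4 (G : grp) : Prop :=
  forall x1 x2 x3 : G, exists k1 k2 k3 : bool, [|| k1, k2 | k3] /\
    gmul (gexp x1 (3 * k1)) (gmul (gexp x2 (3 * k2)) (gexp x3 (3 * k3))) = gone G.
Definition d_id5 (G : grp) : Prop :=
  forall x1 x2 : G, gexp x1 4 = gone G \/ gexp x2 4 = gone G \/
    gexp (gmul x1 x2) 4 = gone G \/ gexp (gmul x1 (gexp x2 2)) 4 = gone G.

Definition satisfies_basis (G : grp) : Prop :=
  [/\ d_id1 G, d_id2 G, d_id3 G, d_id4 G & d_id5 G].

Definition grp_of_fin (gT : finGroupType) : grp :=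
  @Grp gT (fun x y => (x * y)%g) 1%g (fun x => x^-1)%g
       (@mulgA gT) (@mul1g gT) (@mulVg gT).

Definition A4 : grp := grp_of_fin (subg_of (Alt_group 'I_4)).

Definition section_of_A4 (G : grp) : Prop :=
  exists (H K : {group {perm 'I_4}}),
    (H \subset Alt 'I_4)%g /\ (K <| H)%g /\
    exists f : G -> coset_of K,
      injective f /\
      (forall x y, f (gmul x y) = (f x * f y)%g) /\
      (forall x, f x \in (H / K)%g) /\
      (forall y, y \in (H / K)%g -> exists x, f x = y).

From HB Require Import structures.
From mathcomp Require Import all_boot all_fingroup all_solvable.
From mathcomp Require Import alt boolp.

Set Implicit Arguments. Unset Strict Implicit. Unset Printing Implicit Defensive.

(* A4 is the semidirect product (Z/2)^2 ⋊ Z/3: its elements are the normal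
   forms a^i b^j x^k, where a, b generate the Klein group V and x has order 3
   and acts on V by a ↦ b ↦ ab.  On this finite model the five identities are
   checked by evaluation, and they pass to A4 because disjunctions of equations
   survive homomorphic images.
   Conversely, let G satisfy (2)-(5).  By (2) every
   element is an involution or has order 3.  By (3) any two involutions commute
   and by (4) any three distinct nontrivial ones are dependent, so the
   involutions form a group {1, a, b, ab}.  By (2) an element x of order 3
   commutes with no nontrivial involution, hence conjugates a to a new
   involution b and b to ab, and by (5) every element of order 3 is v x or
   v x^2 with v an involution.  So G is the image of A4 (of V if G has exponent
   2) under (i, j, k) ↦ a^i b^j x^k, hence a quotient of a subgroup of A4. *)

Local Open Scope group_scope.

Lemma expg_modn (G : monoidType) (x : G) n m : x ^+ n = 1 -> x ^+ (m %% n) = x ^+ m.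
Proof.
by move=> xn1; rewrite {2}(divn_eq m n) expgnDr mulnC expgnA xn1 expg1n mul1g.
Qed.

Section Involutions.
Variable G : groupType.
Implicit Types u v x : G.

Lemma invg_involution v : v ^+ 2 = 1 -> v^-1 = v.
Proof. exact: mulg1_eq. Qed.

Lemma expg3_involution v : v ^+ 2 = 1 -> v ^+ 3 = v.
Proof. by move=> v2; rewrite expgS v2 mulg1. Qed.

Lemma conj_involution x u : u ^+ 2 = 1 -> u != 1 -> (u ^ x) ^+ 2 = 1 /\ u ^ x != 1.
Proof. by move=> u2 u1; rewrite -conjXg u2 conj1g conjg_eq1. Qed.

End Involutions.

Lemma gmulrV (G : grp) (x : G) : gmul x (ginv x) = gone G.
Proof.
have -> : gmul x (ginv x) = gmul (gmul (ginv (ginv x)) (ginv x)) (gmul x (ginv x)).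
  by rewrite gmulV gmul1.
by rewrite -gmulA (gmulA (ginv x)) gmulV gmul1 gmulV.
Qed.

Lemma gmul1r (G : grp) (x : G) : gmul x (gone G) = x.
Proof. by rewrite -(gmulV x) gmulA gmulrV gmul1. Qed.

Definition grpT (G : grp) : Type := carrier G.
HB.instance Definition _ (G : grp) := gen_eqMixin (grpT G).
HB.instance Definition _ (G : grp) := gen_choiceMixin (grpT G).
HB.instance Definition _ (G : grp) :=
  isGroup.Build (grpT G) (@gmulA G) (@gmul1 G) (@gmul1r G) (@gmulV G) (@gmulrV G).

Lemma gexpE (G : grp) (x : grpT G) n : gexp x n = x ^+ n.
Proof. by elim: n => // n IHn; rewrite expgS -IHn. Qed.

Lemma satisfies_basis_image (G H : grp) (f : G -> H) (g : H -> G) :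
  (forall x y, f (gmul x y) = gmul (f x) (f y)) -> cancel g f ->
  satisfies_basis G -> satisfies_basis H.
Proof.
move=> fM gK [B1 B2 B3 B4 B5].
have f1 : f (gone G) = gone H.
  have e := fM (gone G) (gone G); rewrite gmul1 in e.
  by apply: (@mulIg (grpT H) (f (gone G))); rewrite mul1g {3}e.
have fX x n : f (gexp x n) = gexp (f x) n by elim: n => //= n IHn; rewrite fM IHn.
have fE u : u = gone G -> f u = gone H by move->.
split.
- move=> x; have [i [j [lt_ij /(can_inj gK) e]]] := B1 (g \o x).
  by exists i, j.
- move=> y; case: (B2 (g y)) => /fE; rewrite fX gK; tauto.
- move=> y z; case: (B3 (g y) (g z)) => [|[|]] /fE; rewrite fX ?(fM (g y)) !gK; tauto.
- move=> y1 y2 y3; have [k1 [k2 [k3 [k /fE]]]] := B4 (g y1) (g y2) (g y3).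
  by rewrite !fM !fX !gK => e; exists k1, k2, k3.
- move=> y z; case: (B5 (g y) (g z)) => [|[|[|]]] /fE.
  all: rewrite fX ?(fM (g y)) ?fX !gK; tauto.
Qed.

Lemma pigeonhole (T : finType) n (x : 'I_n -> T) :
  #|T| < n -> exists i j : 'I_n, i < j /\ x i = x j.
Proof.
move=> ltTn.
case: (boolP (injectiveb x)) => [/injectiveP inj_x | /injectivePn [i [j neq_ij e]]].
  by have := leq_card x inj_x; rewrite card_ord leqNgt ltTn.
case: (ltngtP i j) => [lt_ij | lt_ji | /val_inj eq_ij]; first by exists i, j.
  by exists j, i.
by rewrite eq_ij eqxx in neq_ij.
Qed.

(* (v, k) : a4T stands for a^v.1 b^v.2 x^k, where x a x^-1 = b and
   x b x^-1 = a b, i.e. x acts on the Klein group by krot. *)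
Definition klein := (bool * bool)%type.
Definition kadd (v w : klein) : klein := (v.1 (+) w.1, v.2 (+) w.2).
Definition krot (v : klein) : klein := (v.2, v.1 (+) v.2).

Definition z1 : 'I_3 := @Ordinal 3 1 isT.
Definition z2 : 'I_3 := @Ordinal 3 2 isT.
Definition zadd (k l : 'I_3) : 'I_3 := Ordinal (ltn_pmod (k + l) (isT : 0 < 3)).
Definition zopp (k : 'I_3) : 'I_3 := Ordinal (ltn_pmod (3 - k) (isT : 0 < 3)).

Definition a4T := (klein * 'I_3)%type.
Definition a4mul (s t : a4T) : a4T := (kadd s.1 (iter s.2 krot t.1), zadd s.2 t.2).
Definition a4one : a4T := ((false, false), ord0).
Definition a4inv (s : a4T) : a4T := (iter (zopp s.2) krot s.1, zopp s.2).

(* The whole model, or only its Klein four-subgroup when [full] is false. *)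
Definition partA4 (full : bool) (s : a4T) := full || (s.2 == ord0).

Lemma partA4_mul full s t : partA4 full s -> partA4 full t -> partA4 full (a4mul s t).
Proof. by case: full => //=; case: s t => [v k] [w l] /= /eqP -> /eqP ->. Qed.

Definition a4T_enum : seq a4T :=
  [seq (v, k) | v <- [:: (false, false); (false, true); (true, false); (true, true)],
                k <- [:: ord0; z1; z2]].

Lemma mem_a4T_enum s : s \in a4T_enum.
Proof. by case: s => [[[] []] [[|[|[|k]]] ?]]. Qed.

Lemma forall_a4T (P : pred a4T) : all P a4T_enum -> forall s, P s.
Proof. by move=> /allP allP s; apply: allP (mem_a4T_enum s). Qed.

Lemma card_a4T : #|{: a4T}| = 12.
Proof. by rewrite !card_prod !card_bool card_ord. Qed.

Lemma a4mulA s t u : a4mul s (a4mul t u) = a4mul (a4mul s t) u.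
Proof.
have assoc : all (fun s => all (fun t => all (fun u =>
  a4mul s (a4mul t u) == a4mul (a4mul s t) u) a4T_enum) a4T_enum) a4T_enum.
  by vm_compute.
exact/eqP/(forall_a4T (forall_a4T (forall_a4T assoc s) t) u).
Qed.

Lemma a4mul1 s : a4mul a4one s = s.
Proof.
have left_id : all (fun s => a4mul a4one s == s) a4T_enum by vm_compute.
exact/eqP/(forall_a4T left_id s).
Qed.

Lemma a4mulV s : a4mul (a4inv s) s = a4one.
Proof.
have left_inv : all (fun s => a4mul (a4inv s) s == a4one) a4T_enum by vm_compute.
exact/eqP/(forall_a4T left_inv s).
Qed.

Definition A4model : grp := Grp a4mulA a4mul1 a4mulV.

Local Notation a4exp := (@gexp A4model).

Lemma A4model_basis : satisfies_basis A4model.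
Proof.
split.
- by move=> x; apply: (@pigeonhole a4T); rewrite card_a4T.
- move=> s.
  have id2 : all (fun s => (a4exp s 2 == a4one) || (a4exp s 3 == a4one)) a4T_enum.
    by vm_compute.
  by case/orP: (forall_a4T id2 s) => /eqP; tauto.
- move=> s t.
  have id3 : all (fun s => all (fun t => [|| a4exp s 3 == a4one, a4exp t 3 == a4one
                        | a4exp (a4mul s t) 2 == a4one]) a4T_enum) a4T_enum.
    by vm_compute.
  by case/or3P: (forall_a4T (forall_a4T id3 s) t) => /eqP; tauto.
- move=> s t u.
  have id4 : all (fun s => all (fun t => all (fun u =>
      has (fun k : bool * bool * bool => [|| k.1.1, k.1.2 | k.2] &&
        (a4mul (a4exp s (3 * k.1.1)) (a4mul (a4exp t (3 * k.1.2)) (a4exp u (3 * k.2)))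
           == a4one))
        [seq (ij, l) | ij <- [seq (i, j) | i <- [:: false; true], j <- [:: false; true]],
                       l <- [:: false; true]])
      a4T_enum) a4T_enum) a4T_enum.
    by vm_compute.
  case/hasP: (forall_a4T (forall_a4T (forall_a4T id4 s) t) u) => [[[i j] l]] _.
  by case/andP => k /eqP e; exists i, j, l.
- move=> s t.
  have id5 : all (fun s => all (fun t => [|| a4exp s 4 == a4one, a4exp t 4 == a4one,
      a4exp (a4mul s t) 4 == a4one | a4exp (a4mul s (a4exp t 2)) 4 == a4one])
    a4T_enum) a4T_enum.
    by vm_compute.
  by case/or4P: (forall_a4T (forall_a4T id5 s) t) => /eqP; tauto.
Qed.

Section NormalForm.
Variables (G : groupType) (a b x : G).

Definition klein_rel := [/\ a ^+ 2 = 1, b ^+ 2 = 1 & commute a b].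
Definition rot_rel := x * a = b * x /\ x * b = a * b * x.

Definition kleinw (v : klein) : G := a ^+ v.1 * b ^+ v.2.
Definition nf (s : a4T) : G := kleinw s.1 * x ^+ s.2.

Definition nf_presentation (full : bool) :=
  [/\ klein_rel, x ^+ 3 = 1, full -> rot_rel &
      forall g, exists2 s, partA4 full s & nf s = g].

Hypothesis kleinR : klein_rel.

Lemma kleinwD v w : kleinw v * kleinw w = kleinw (kadd v w).
Proof.
case: kleinR => a2 b2 cab; rewrite /kleinw -!mulgA (mulgA (b ^+ v.2)).
rewrite -(commuteX2 _ _ cab) -(mulgA (a ^+ w.1)) (mulgA (a ^+ v.1)) -!expgnDr.
have expg_addb (y : G) (i j : bool) : y ^+ 2 = 1 -> y ^+ (i + j) = y ^+ (i (+) j).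
  by move=> y2; rewrite -(expg_modn _ y2); case: i; case: j.
by rewrite expg_addb // expg_addb.
Qed.

Lemma conj_kleinw v : rot_rel -> x * kleinw v = kleinw (krot v) * x.
Proof.
case: kleinR => _ b2 cab [xa xb]; rewrite /kleinw.
case: v => [[] []] /=; rewrite ?expg1 ?expg0 ?mulg1 ?mul1g //.
by rewrite mulgA xa -mulgA xb !mulgA -cab -(mulgA a) -expg2 b2 mulg1.
Qed.

Lemma conjX_kleinw k v : (k = 0 \/ rot_rel) ->
  x ^+ k * kleinw v = kleinw (iter k krot v) * x ^+ k.
Proof.
case=> [-> | xR]; first by rewrite mulg1 mul1g.
elim: k v => [|k IHk] v; first by rewrite mulg1 mul1g.
by rewrite expgS -mulgA IHk mulgA conj_kleinw // -mulgA -expgS.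
Qed.

Hypothesis x3 : x ^+ 3 = 1.

Lemma nf_mul (s t : a4T) : ((s.2 : nat) = 0 \/ rot_rel) -> nf (a4mul s t) = nf s * nf t.
Proof.
move=> sR; rewrite /nf -[RHS]mulgA [in RHS](mulgA (x ^+ s.2)) conjX_kleinw //.
by rewrite [in RHS]mulgA [in RHS]mulgA kleinwD -[in RHS]mulgA -expgnDr /= expg_modn.
Qed.

End NormalForm.

Definition o0 : 'I_4 := @Ordinal 4 0 isT.
Definition o1 : 'I_4 := @Ordinal 4 1 isT.
Definition o2 : 'I_4 := @Ordinal 4 2 isT.
Definition o3 : 'I_4 := @Ordinal 4 3 isT.

Definition pa : {perm 'I_4} := tperm o0 o1 * tperm o2 o3.
Definition pb : {perm 'I_4} := tperm o0 o3 * tperm o1 o2.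
Definition pt : {perm 'I_4} := tperm o1 o2 * tperm o1 o3.

(* Permutations do not reduce under vm_compute, so products of pa, pb, pt are
   evaluated through these functions on nat. *)
Definition fa (n : nat) : nat := match n with 0 => 1 | 1 => 0 | 2 => 3 | 3 => 2 | _ => n end.
Definition fb (n : nat) : nat := match n with 0 => 3 | 1 => 2 | 2 => 1 | 3 => 0 | _ => n end.
Definition ft (n : nat) : nat := match n with 1 => 2 | 2 => 3 | 3 => 1 | _ => n end.

Lemma tpermE (T : finType) (x y z : T) :
  tperm x y z = if z == x then y else if z == y then x else z.
Proof.
by rewrite permE /=; case: (z =P y) => [->|]; case: (y =P x) => [->|]; case: (z =P x).
Qed.

Lemma pa_val i : val (pa i) = fa i.
Proof. by rewrite permM !tpermE; case: i => [[|[|[|[|m]]]] ?]. Qed.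

Lemma pb_val i : val (pb i) = fb i.
Proof. by rewrite permM !tpermE; case: i => [[|[|[|[|m]]]] ?]. Qed.

Lemma pt_val i : val (pt i) = ft i.
Proof. by rewrite permM !tpermE; case: i => [[|[|[|[|m]]]] ?]. Qed.

Lemma perm_A4_rel : klein_rel pa pb /\ pt ^+ 3 = 1 /\ rot_rel pa pb pt.
Proof.
do ![split]; try rewrite /commute; apply/permP => i; apply/val_inj;
  rewrite ?permX ?perm1 /= !permM !tpermE; by case: i => [[|[|[|[|m]]]] ?].
Qed.

Definition nfp : a4T -> {perm 'I_4} := nf pa pb pt.

Lemma nfp_mul s t : nfp (a4mul s t) = nfp s * nfp t.
Proof. by have [kR [t3 tR]] := perm_A4_rel; apply: nf_mul => //; right. Qed.

Lemma nfp_one : nfp a4one = 1.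
Proof. by rewrite /nfp /nf /kleinw /= !mulg1. Qed.

Lemma nfp_Alt s : nfp s \in 'Alt_('I_4).
Proof.
have even_pair (i j k l : 'I_4) : i != j -> k != l -> tperm i j * tperm k l \in 'Alt_('I_4).
  by move=> ij kl; rewrite Alt_even odd_permM !odd_tperm ij kl.
by rewrite /nfp /nf /kleinw !groupM ?groupX ?even_pair.
Qed.

Definition fnf (s : a4T) (n : nat) : nat := iter s.2 ft (iter s.1.2 fb (iter s.1.1 fa n)).

Lemma iter_perm_val n (p : {perm 'I_n}) f :
  (forall i, val (p i) = f (val i)) -> forall k i, val (iter k p i) = iter k f (val i).
Proof. by move=> pf; elim=> // k IHk i; rewrite !iterS pf IHk. Qed.

Lemma nfp_val s i : val (nfp s i) = fnf s i.
Proof.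
rewrite /nfp /nf /kleinw !permM !permX.
by rewrite !(iter_perm_val pa_val, iter_perm_val pb_val, iter_perm_val pt_val).
Qed.

Lemma nfp_inj : injective nfp.
Proof.
have sep : all (fun s => all (fun t =>
  ((fnf s 0, fnf s 1) == (fnf t 0, fnf t 1)) ==> (s == t)) a4T_enum) a4T_enum.
  by vm_compute.
move=> s t e; apply/eqP; move: (forall_a4T (forall_a4T sep s) t).
by rewrite -!(nfp_val _ o0) -!(nfp_val _ o1) e eqxx.
Qed.

Lemma nfp_image : nfp @: setT = 'Alt_('I_4).
Proof.
apply/eqP; rewrite eqEcard; apply/andP; split.
  by apply/subsetP => _ /imsetP[s _ ->]; apply: nfp_Alt.
rewrite (card_imset _ nfp_inj) cardsT card_a4T -(leq_pmul2l (isT : 0 < 2)).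
by rewrite card_Alt card_ord.
Qed.

Definition nfp_inv (h : {perm 'I_4}) : a4T := odflt a4one [pick s | nfp s == h].

Lemma nfp_invK : cancel nfp nfp_inv.
Proof.
by move=> s; rewrite /nfp_inv; case: pickP => [t /eqP/nfp_inj | /(_ s)] //; rewrite eqxx.
Qed.

Lemma nfp_invKV h : h \in 'Alt_('I_4) -> nfp (nfp_inv h) = h.
Proof. by rewrite -nfp_image => /imsetP[s _ ->]; rewrite nfp_invK. Qed.

Lemma A4_basis : satisfies_basis A4.
Proof.
apply: (@satisfies_basis_image A4model A4 (fun s => subg _ (nfp s))
          (fun y => nfp_inv (sgval y))) A4model_basis.
  by move=> s t; rewrite /= nfp_mul subgM ?nfp_Alt.
by move=> y; rewrite /= nfp_invKV ?subgP ?sgvalK.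
Qed.

Definition nfp_part (full : bool) := nfp @: [set s | partA4 full s].

Lemma nfp_part_group_set full : group_set (nfp_part full).
Proof.
apply/group_setP; split.
  by apply/imsetP; exists a4one; [rewrite inE /partA4 orbT | rewrite nfp_one].
move=> _ _ /imsetP[s Ps ->] /imsetP[t Pt ->]; apply/imsetP.
by exists (a4mul s t); rewrite ?nfp_mul // inE partA4_mul // -inE.
Qed.

Canonical nfp_part_group full := Group (nfp_part_group_set full).

Lemma nfp_part_Alt full : nfp_part full \subset 'Alt_('I_4).
Proof. by apply/subsetP => _ /imsetP[s _ ->]; apply: nfp_Alt. Qed.

Section SurjectiveMorphism.
Variables (gT : finGroupType) (rT : groupType) (H : {group gT}) (phi : gT -> rT).
Hypothesis phiM : {in H &, {morph phi : u v / u * v}}.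
Hypothesis phi_onto : forall y, exists2 h, h \in H & phi h = y.

Lemma morph_phi1 : phi 1 = 1.
Proof. by apply: (@mulIg _ (phi 1)); rewrite -phiM ?group1 // !mul1g. Qed.

Lemma morph_phiV : {in H, {morph phi : u / u^-1}}.
Proof. by move=> h Hh; apply/esym/mulg1_eq; rewrite -phiM ?groupV // mulgV morph_phi1. Qed.

Definition kerphi := [set h in H | phi h == 1].

Lemma kerphi_group_set : group_set kerphi.
Proof.
apply/group_setP; split=> [|u v]; first by rewrite inE group1 morph_phi1 /=.
rewrite !inE => /andP[Hu /eqP phiu] /andP[Hv /eqP phiv].
by rewrite groupM // phiM // phiu phiv mulg1 /=.
Qed.

Canonical kerphi_group := Group kerphi_group_set.

Lemma kerphi_normal : kerphi_group <| H.
Proof.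
apply/andP; split; first by apply/subsetP => h; rewrite inE => /andP[].
apply/subsetP => h Hh; rewrite inE; apply/subsetP => u.
rewrite mem_conjg -{2}[u](conjgKV h); move: (u ^ h^-1) => w.
rewrite !inE => /andP[Hw /eqP phiw]; rewrite groupJ //= conjgE.
by rewrite !phiM ?groupM ?groupV // phiw mul1g morph_phiV // mulVg.
Qed.

Lemma coset_kerphiP u v : u \in H -> v \in H ->
  coset kerphi_group u = coset kerphi_group v <-> phi u = phi v.
Proof.
move=> Hu Hv; have nKH := subsetP (normal_norm kerphi_normal).
have phiKP : (u * v^-1 \in kerphi) = (phi u == phi v).
  by rewrite inE groupM ?groupV //= phiM ?groupV // morph_phiV // divg_eq1.
rewrite (rwP (rcoset_kercosetP (nKH _ Hu) (nKH _ Hv))) mem_rcoset phiKP.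
by split=> /eqP.
Qed.

Lemma exists_preim y : exists h, (h \in H) && (phi h == y).
Proof. by have [h Hh <-] := phi_onto y; exists h; rewrite Hh eqxx. Qed.

Definition preim y : gT := xchoose (exists_preim y).

Lemma preim_in y : preim y \in H.
Proof. by case/andP: (xchooseP (exists_preim y)). Qed.

Lemma phi_preim y : phi (preim y) = y.
Proof. by case/andP: (xchooseP (exists_preim y)) => _ /eqP. Qed.

Lemma isom_quotient_kerphi : exists K : {group gT}, K <| H /\
  exists f : rT -> coset_of K, injective f /\ (forall y z, f (y * z) = f y * f z) /\
    (forall y, f y \in H / K) /\ (forall c, c \in H / K -> exists y, f y = c).
Proof.
have nKH := subsetP (normal_norm kerphi_normal).
exists kerphi_group; split; first exact: kerphi_normal.
exists (fun y => coset kerphi_group (preim y)); split.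
  by move=> y z /coset_kerphiP; rewrite !phi_preim; apply; apply: preim_in.
split.
  move=> y z; rewrite -morphM ?nKH ?preim_in //=.
  apply/coset_kerphiP; rewrite ?groupM ?preim_in //.
  by rewrite phiM ?preim_in // !phi_preim.
split; first by move=> y; rewrite mem_quotient ?preim_in.
move=> _ /morphimP[h Nh Hh ->]; exists (phi h).
by apply/coset_kerphiP; rewrite ?phi_preim ?preim_in.
Qed.

End SurjectiveMorphism.

Lemma section_of_A4_nf (G : grp) (a b x : grpT G) (full : bool) :
  nf_presentation a b x full -> section_of_A4 G.
Proof.
case=> kR x3 xR onto.
pose phi h := nf a b x (nfp_inv h).
have phiM : {in nfp_part_group full &, {morph phi : u v / u * v}}.
  move=> _ _ /imsetP[s Ps ->] /imsetP[t Pt ->]; rewrite inE in Ps.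
  rewrite /phi -nfp_mul !nfp_invK; apply: nf_mul => //.
  by case/orP: Ps => [/xR | /eqP ->]; [right | left].
have phi_onto g : exists2 h, h \in nfp_part_group full & phi h = g.
  have [s Ps <-] := onto g.
  by exists (nfp s); [apply: imset_f; rewrite inE | rewrite /phi nfp_invK].
have [K [nKH isoK]] := isom_quotient_kerphi phiM phi_onto.
by exists (nfp_part_group full), K; split; first exact: nfp_part_Alt.
Qed.

Section Classification.
Variable G : groupType.
Hypothesis D2 : forall y : G, y ^+ 2 = 1 \/ y ^+ 3 = 1.
Hypothesis D3 : forall y z : G, y ^+ 3 = 1 \/ z ^+ 3 = 1 \/ (y * z) ^+ 2 = 1.
Hypothesis D4 : forall y1 y2 y3 : G, exists k1 k2 k3 : bool, [|| k1, k2 | k3] /\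
  y1 ^+ (3 * k1) * (y2 ^+ (3 * k2) * y3 ^+ (3 * k3)) = 1.
Hypothesis D5 : forall y z : G, y ^+ 4 = 1 \/ z ^+ 4 = 1 \/ (y * z) ^+ 4 = 1 \/
  (y * z ^+ 2) ^+ 4 = 1.

Definition in_span (a b v : G) := exists i j : bool, v = a ^+ i * b ^+ j.

Lemma order3 (x : G) : x ^+ 2 != 1 -> x ^+ 3 = 1.
Proof. by case: (D2 x) => // ->; rewrite eqxx. Qed.

Lemma involution_of_expg4 (v : G) : v ^+ 4 = 1 -> v ^+ 2 = 1.
Proof. by case: (D2 v) => // v3; rewrite expgSr v3 mul1g => ->; rewrite expg1n. Qed.

Lemma involutions_commute (u v : G) : u ^+ 2 = 1 -> v ^+ 2 = 1 -> commute u v.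
Proof.
move=> u2 v2; case: (D3 u v) => [|[|uv2]]; rewrite ?expg3_involution //.
- by move->; apply/commute_sym/commute1.
- by move->; apply: commute1.
by have := invg_involution uv2; rewrite invMg !invg_involution.
Qed.

Lemma involution_in_span (a b v : G) : a ^+ 2 = 1 -> b ^+ 2 = 1 -> v ^+ 2 = 1 ->
  a != 1 -> b != 1 -> a != b -> in_span a b v.
Proof.
move=> a2 b2 v2 a1 b1 ab; have [k1 [k2 [k3 [+ e]]]] := D4 a b v.
move: e; case: k1; case: k2; case: k3 => //= + _;
  rewrite ?muln0 ?muln1 ?expg0 ?expg3_involution ?mul1g ?mulg1 // => e.
- exists true, true; move: e; rewrite mulgA => /mulg1_eq <-.
  by rewrite invMg !invg_involution // involutions_commute.
- by rewrite -(invg_involution a2) (mulg1_eq e) eqxx in ab.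
- by exists true, false; rewrite -(mulg1_eq e) invg_involution ?mulg1.
- by rewrite e eqxx in a1.
- by exists false, true; rewrite -(mulg1_eq e) invg_involution ?mul1g.
- by rewrite e eqxx in b1.
- by exists false, false; rewrite e mulg1.
Qed.

Lemma involution_basis : exists a b : G,
  [/\ a ^+ 2 = 1, b ^+ 2 = 1 & forall v, v ^+ 2 = 1 -> in_span a b v].
Proof.
have span1 (a v : G) : v = 1 \/ v = a -> in_span a 1 v.
  by case=> ->; [exists false, false | exists true, false]; rewrite expg1n ?mulg1.
case: (pselect (exists a : G, a ^+ 2 = 1 /\ a != 1)) => [[a [a2 a1]] | no_a].
  case: (pselect (exists b : G, [/\ b ^+ 2 = 1, b != 1 & b != a])) => [[b [b2 b1 ba]] | no_b].
    by exists a, b; split=> // v v2; apply: involution_in_span; rewrite // eq_sym.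
  exists a, 1; split=> // [|v v2]; first exact: expg1n.
  apply: span1; have [->|v1] := eqVneq v 1; first by left.
  by have [->|va] := eqVneq v a; [right | case: no_b; exists v].
exists 1, 1; split=> [||v v2]; rewrite ?expg1n //; apply: span1; left.
by apply/eqP; apply: contra_notT no_a => v1; exists v.
Qed.

Lemma order3_not_commute (x v : G) : x ^+ 2 != 1 -> v ^+ 2 = 1 -> v != 1 -> ~ commute x v.
Proof.
move=> x2 v2 v1 cxv; case: (D2 (x * v)); rewrite expgMn //.
  by rewrite v2 mulg1 => x2'; rewrite x2' eqxx in x2.
by rewrite (order3 x2) expg3_involution // mul1g => v1'; rewrite v1' eqxx in v1.
Qed.

Lemma conj_order3_neq (x u : G) : x ^+ 2 != 1 -> u ^+ 2 = 1 -> u != 1 -> u ^ x^-1 != u.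
Proof.
move=> x2 u2 u1; apply/eqP => ux; apply: (order3_not_commute x2 u2 u1).
by rewrite /commute -{2}ux conjgE invgK mulgA mulgKV.
Qed.

Lemma conj_order3_klein (x a : G) : x ^+ 2 != 1 -> a ^+ 2 = 1 -> a != 1 ->
  (a ^ x^-1) ^ x^-1 = a * a ^ x^-1.
Proof.
move=> x2 a2 a1; have x3 := order3 x2.
have [b2 b1] := conj_involution x^-1 a2 a1; have [c2 c1] := conj_involution x^-1 b2 b1.
have ab : a != a ^ x^-1 by rewrite eq_sym; apply: conj_order3_neq.
have bc : a ^ x^-1 != (a ^ x^-1) ^ x^-1 by rewrite eq_sym; apply: conj_order3_neq.
have ca : (a ^ x^-1) ^ x^-1 != a.
  have xV : x^-1 = x ^+ 2 by apply: mulg1_eq; rewrite -expgS x3.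
  rewrite -conjgM xV -expgnDr (expgSr x 3) x3 mul1g.
  apply/eqP => ax; apply: (order3_not_commute x2 a2 a1).
  by rewrite /commute -{1}ax conjgE mulKVg.
move: ca bc c1; have [[] [[] ->]] := involution_in_span a2 b2 c2 a1 b1 ab;
  by rewrite /= ?expg1 ?expg0 ?mulg1 ?mul1g ?eqxx.
Qed.

Lemma nf_onto (a b x : G) : x ^+ 2 != 1 -> (forall v, v ^+ 2 = 1 -> in_span a b v) ->
  forall g, exists2 s, partA4 true s & nf a b x s = g.
Proof.
move=> x2 span g; have x3 := order3 x2.
have [g2 | g2] := eqVneq (g ^+ 2) 1.
  by have [i [j ->]] := span g g2; exists ((i, j), ord0); rewrite // /nf /kleinw mulg1.
case: (D5 g x) => [|[|[|]]] /involution_of_expg4 v2.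
- by rewrite v2 eqxx in g2.
- by rewrite v2 eqxx in x2.
- have [i [j e]] := span _ v2; exists ((i, j), z2) => //.
  by rewrite /nf /kleinw /= -e -mulgA -expgS x3 mulg1.
- have [i [j e]] := span _ v2; exists ((i, j), z1) => //.
  by rewrite /nf /kleinw /= -e expg1 -mulgA -expgSr x3 mulg1.
Qed.

Lemma nf_presentation_exponent2 :
  (forall y : G, y ^+ 2 = 1) -> exists a b x : G, nf_presentation a b x false.
Proof.
move=> all2; have [a [b [a2 b2 span]]] := involution_basis.
exists a, b, 1; split; rewrite ?expg1n //; first by split=> //; apply: involutions_commute.
move=> g; have [i [j ->]] := span g (all2 g).
by exists ((i, j), ord0); rewrite // /nf /kleinw expg1n mulg1.
Qed.

Lemma nf_presentation_order3 (x : G) :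
  x ^+ 2 != 1 -> exists a b : G, nf_presentation a b x true.
Proof.
move=> x2; have x3 := order3 x2.
case: (pselect (exists a : G, a ^+ 2 = 1 /\ a != 1)) => [[a [a2 a1]] | no_a].
  have [b2 b1] := conj_involution x^-1 a2 a1.
  have ab : a != a ^ x^-1 by rewrite eq_sym; apply: conj_order3_neq.
  exists a, (a ^ x^-1); split=> //.
  - by split=> //; apply: involutions_commute.
  - move=> _; split; first by rewrite conjgE invgK mulgA mulgKV.
    by rewrite -conj_order3_klein // [in RHS]conjgE invgK [in RHS]mulgA mulgKV.
  exact: nf_onto x2 (fun v v2 => involution_in_span a2 b2 v2 a1 b1 ab).
exists 1, 1; split=> //; first by split; rewrite ?expg1n.
  by rewrite /rot_rel !mulg1 mul1g.
apply: nf_onto x2 _ => v v2; exists false, false; rewrite mulg1; apply/eqP.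
by apply: contra_notT no_a => v1; exists v.
Qed.

Lemma exists_nf_presentation : exists (a b x : G) (full : bool), nf_presentation a b x full.
Proof.
case: (pselect (exists x : G, x ^+ 2 != 1)) => [[x /nf_presentation_order3] | all2].
  by case=> a [b P]; exists a, b, x, true.
have [|a [b [x P]]] := nf_presentation_exponent2; last by exists a, b, x, false.
by move=> y; apply/eqP; apply: contra_notT all2 => y2; exists y.
Qed.

End Classification.

Lemma section_of_A4_basis (G : grp) : satisfies_basis G -> section_of_A4 G.
Proof.
case=> _ B2 B3 B4 B5.
have D2 (y : grpT G) : y ^+ 2 = 1 \/ y ^+ 3 = 1 by rewrite -!gexpE; apply: B2.
have D3 (y z : grpT G) : y ^+ 3 = 1 \/ z ^+ 3 = 1 \/ (y * z) ^+ 2 = 1.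
  by rewrite -!gexpE; apply: B3.
have D4 (y1 y2 y3 : grpT G) : exists k1 k2 k3 : bool, [|| k1, k2 | k3] /\
    y1 ^+ (3 * k1) * (y2 ^+ (3 * k2) * y3 ^+ (3 * k3)) = 1.
  by have [k1 [k2 [k3 [k e]]]] := B4 y1 y2 y3; exists k1, k2, k3; rewrite -!gexpE.
have D5 (y z : grpT G) : y ^+ 4 = 1 \/ z ^+ 4 = 1 \/ (y * z) ^+ 4 = 1 \/
    (y * z ^+ 2) ^+ 4 = 1.
  by rewrite -!gexpE; apply: B5.
have [a [b [x [full P]]]] := exists_nf_presentation D2 D3 D4 D5.
exact: section_of_A4_nf P.
Qed.

Theorem proposition3 :
  satisfies_basis A4 /\
  (forall G : grp, satisfies_basis G -> section_of_A4 G).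
Proof. by split; [apply: A4_basis | apply: section_of_A4_basis]. Qed.
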